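(* Let $S = R \cup B$ be a finite set of points in the plane in general position (no three collinear), partitioned into red points $R$ and blue points $B$, with $|R| \ge 2$ and $|B| \ge 2$. Then $S$ contains a balanced $4$-hole.
   Context: A hole of $S$ is a simple polygon $Q$ whose vertices are points of $S$ and whose interior contains no point of $S$; a $k$-hole is a hole with $k$ vertices. Holes need not be convex. A $4$-hole is balanced if it has exactly two red and two blue vertices. *)

From HB Require Import structures.
From mathcomp Require Import all_boot all_order all_algebra.
Set Implicit Arguments. Unset Strict Implicit. Unset Printing Implicit Defensive.
Import Order.TTheory GRing.Theory Num.Theory.
Local Open Scope ring_scope.

Section Geom.
Variable R : realFieldType.
Definition point := (R * R)%type.

(* twice the signed area of triangle pqr *)
Definition orient (p q r : point) : R :=
  (q.1 - p.1) * (r.2 - p.2) - (q.2 - p.2) * (r.1 - p.1).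

Definition general_position (S : seq point) : Prop :=
  forall p q r, p \in S -> q \in S -> r \in S ->
    p != q -> q != r -> p != r -> orient p q r != 0.

Definition on_seg (p a b : point) : Prop :=
  exists t : R, 0 <= t <= 1 /\
    p = (a.1 + t * (b.1 - a.1), a.2 + t * (b.2 - a.2)).

Definition in_tri (p a b c : point) : Prop :=
  exists u v w : R, [/\ 0 <= u, 0 <= v, 0 <= w, u + v + w = 1 &
    p = (u * a.1 + v * b.1 + w * c.1, u * a.2 + v * b.2 + w * c.2)].

Definition simple_quad (a b c d : point) : Prop :=
  [/\ uniq [:: a; b; c; d],
      ~ (exists p, on_seg p a b /\ on_seg p c d),
      ~ (exists p, on_seg p b c /\ on_seg p d a) &
      [/\ forall p, on_seg p a b -> on_seg p b c -> p = b,
          forall p, on_seg p b c -> on_seg p c d -> p = c,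
          forall p, on_seg p c d -> on_seg p d a -> p = d &
          forall p, on_seg p d a -> on_seg p a b -> p = a]].

Definition on_boundary (p a b c d : point) : Prop :=
  [\/ on_seg p a b, on_seg p b c, on_seg p c d | on_seg p d a].

(* Closed region bounded by the simple quadrilateral a-b-c-d-a: it is the
   union of the two triangles cut out by an internal diagonal.  The diagonal
   ac is internal iff b and d lie strictly on opposite sides of line ac;
   otherwise (for a simple quadrilateral) bd is internal. *)
Definition in_region (p a b c d : point) : Prop :=
  if orient a c b * orient a c d < 0
  then in_tri p a b c \/ in_tri p a c d
  else in_tri p b a d \/ in_tri p b c d.

Definition in_interior (p a b c d : point) : Prop :=
  in_region p a b c d /\ ~ on_boundary p a b c d.

Definition hole4 (S : seq point) (a b c d : point) : Prop :=
  [/\ all (fun x => x \in S) [:: a; b; c; d],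
      simple_quad a b c d &
      forall s, s \in S -> ~ in_interior s a b c d].

End Geom.

From HB Require Import structures.
From mathcomp Require Import all_boot all_order all_algebra.
From mathcomp Require Import ring lra.
From Stdlib Require Import Classical_Prop.
Import Order.TTheory GRing.Theory Num.Theory.
Set Implicit Arguments. Unset Strict Implicit. Unset Printing Implicit Defensive.
Local Open Scope ring_scope.

(* Choose red points r1, r2 and blue points b1, b2.  If no other point of S
   lies in the convex hull of these four, then one of the lines r1r2,
   r1b1, r1b2 separates the two remaining points; the quadrilateral with the
   corresponding diagonal is simple, its region lies in the hull, so it is a
   balanced 4-hole.  Otherwise some point t of S lies in the hull, say t is
   red.  By an exchange argument for convex hulls, t replaces r1 or r2 so that
   the new hull lies in the old one and has lost the replaced vertex: if both
   r1 and r2 stayed inside the new hulls, r1 would lie on the segment b1b2,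
   against general position.  So the number of points of S in the hull drops
   and the process stops. *)

Section ConvexHull.
Variables (R : numFieldType) (V : lmodType R).
Implicit Types (k : R) (p t x y : V) (s S Q L : seq V) (ws : seq (R * V)).

Definition weights_on s ws := all (fun e => (0 <= e.1) && (e.2 \in s)) ws.
Definition wsum ws := \sum_(e <- ws) e.1.
Definition wmoment ws p := \sum_(e <- ws) e.1 *: (e.2 - p).
Definition wscale k ws := [seq (k * e.1, e.2) | e <- ws].

(* Weights sit on entries of a list of (weight, point) pairs rather than on
   points, so splitting off one vertex (weights_on_cons) needs no condition on
   repeated points. *)
Definition in_hull p s :=
  exists ws, [/\ weights_on s ws, 0 < wsum ws & wmoment ws p = 0].

Lemma weights_on_sub s s' ws :
  {subset s <= s'} -> weights_on s ws -> weights_on s' ws.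
Proof. by move=> ss' /allP w_s; apply/allP=> e /w_s /andP[-> /ss']. Qed.

Lemma weights_on_cat s ws1 ws2 :
  weights_on s (ws1 ++ ws2) = weights_on s ws1 && weights_on s ws2.
Proof. exact: all_cat. Qed.

Lemma weights_on_scale k s ws :
  0 <= k -> weights_on s ws -> weights_on s (wscale k ws).
Proof.
move=> k_ge0 /allP w_s; apply/allP=> _ /mapP[e /w_s /andP[e_ge0 e_s] ->].
by rewrite /= mulr_ge0.
Qed.

Lemma wsum_ge0 s ws : weights_on s ws -> 0 <= wsum ws.
Proof. by move=> /allP w_s; rewrite /wsum big_seq sumr_ge0 // => e /w_s /andP[]. Qed.

Lemma wsum_cat ws1 ws2 : wsum (ws1 ++ ws2) = wsum ws1 + wsum ws2.
Proof. exact: big_cat. Qed.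

Lemma wmoment_cat ws1 ws2 p :
  wmoment (ws1 ++ ws2) p = wmoment ws1 p + wmoment ws2 p.
Proof. exact: big_cat. Qed.

Lemma wsum_scale k ws : wsum (wscale k ws) = k * wsum ws.
Proof. by rewrite /wsum big_map mulr_sumr. Qed.

Lemma wmoment_scale k ws p : wmoment (wscale k ws) p = k *: wmoment ws p.
Proof.
by rewrite /wmoment big_map scaler_sumr; apply: eq_bigr => e _; rewrite scalerA.
Qed.

Lemma wmoment_shift ws p q : wmoment ws p = wmoment ws q + wsum ws *: (q - p).
Proof.
rewrite /wmoment /wsum scaler_suml -big_split; apply: eq_bigr => e _.
by rewrite /= -scalerDr addrA subrK.
Qed.

Lemma wmoment_wsum0 s ws p :
  weights_on s ws -> wsum ws = 0 -> wmoment ws p = 0.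
Proof.
move=> /allP w_s /eqP; rewrite /wsum big_seq psumr_eq0 => [/allP w0|e /w_s /andP[]//].
rewrite /wmoment big1_seq // => e /andP[_ e_ws].
by rewrite (eqP (implyP (w0 e e_ws) e_ws)) scale0r.
Qed.

Lemma weights_on_cons y s ws : weights_on (y :: s) ws ->
  exists a ws', [/\ 0 <= a, weights_on s ws', wsum ws = a + wsum ws' &
                    forall p, wmoment ws p = a *: (y - p) + wmoment ws' p].
Proof.
move=> w_ys; exists (wsum [seq e <- ws | e.2 == y]), [seq e <- ws | e.2 != y].
split.
- apply: (@wsum_ge0 (y :: s)); rewrite /weights_on all_filter.
  by apply/allP=> e /(allP w_ys) /= ->; rewrite implybT.
- rewrite /weights_on all_filter; apply/allP=> e /(allP w_ys) /=.
  by rewrite inE => /andP[-> /orP[/eqP->|->]]; rewrite ?eqxx ?implybT.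
- by rewrite /wsum !big_filter (bigID (fun e => e.2 == y)) /=.
- move=> p; rewrite /wmoment /wsum scaler_suml !big_filter.
  by rewrite (bigID (fun e => e.2 == y)) /=; congr (_ + _); apply: eq_bigr => e /eqP->.
Qed.

Lemma in_hull_sub s s' p : {subset s <= s'} -> in_hull p s -> in_hull p s'.
Proof.
by move=> ss' [ws [w_s ? ?]]; exists ws; split=> //; apply: weights_on_sub w_s.
Qed.

Lemma in_hull_cons_inv y s p : in_hull p (y :: s) ->
  exists a ws, [/\ 0 <= a, weights_on s ws, 0 < a + wsum ws &
                   a *: (y - p) + wmoment ws p = 0].
Proof.
case=> ws [/weights_on_cons[a [ws' [? ? W_eq M_eq]]] ? ?].
by exists a, ws'; rewrite -W_eq -M_eq.
Qed.

Lemma in_hull2_inv p a b : in_hull p [:: a; b] ->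
  exists u v, [/\ 0 <= u, 0 <= v, 0 < u + v & u *: (a - p) + v *: (b - p) = 0].
Proof.
case/in_hull_cons_inv=> u [ws [u_ge0 /weights_on_cons[v [ws' [v_ge0 w' W M]]] pos bal]].
have ws'0 : ws' = [::] by case: ws' w' {W M} => // -[? ?] ? /andP[/andP[_]].
by exists u, v; move: pos bal; rewrite W M ws'0 /wsum /wmoment !big_nil !addr0.
Qed.

Lemma in_hull_cons_trans y s s' p :
  {subset s <= s'} -> in_hull y s' -> in_hull p (y :: s) -> in_hull p s'.
Proof.
move=> ss' [ws [w_s' W_gt0 y_bal]] /in_hull_cons_inv[a [ws' [a_ge0 w_s pos p_bal]]].
exists (wscale a ws ++ wscale (wsum ws) ws'); split.
- rewrite weights_on_cat !weights_on_scale ?(ltW W_gt0) //.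
  exact: weights_on_sub w_s.
- by rewrite wsum_cat !wsum_scale mulrC -mulrDr mulr_gt0.
rewrite wmoment_cat !wmoment_scale (wmoment_shift ws p y) y_bal add0r.
by rewrite scalerA mulrC -scalerA -scalerDr p_bal scaler0.
Qed.

(* Substituting the representation of [y] over [x :: s] into that of [x]
   eliminates [y]. *)
Lemma in_hull_exchange x y s :
  x != y -> in_hull x (y :: s) -> in_hull y (x :: s) -> in_hull x s.
Proof.
move=> xy /in_hull_cons_inv[a [ws [a_ge0 w_s pos x_bal]]].
move=> /in_hull_cons_inv[b [ws' [b_ge0 w_s' pos' y_bal]]].
have A_ge0 := wsum_ge0 w_s; have B_ge0 := wsum_ge0 w_s'.
have B_gt0 : 0 < wsum ws'.
  rewrite lt_def B_ge0 andbT; apply/eqP=> B0; move: y_bal.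
  rewrite (wmoment_wsum0 _ w_s' B0) addr0 => /eqP.
  rewrite scaler_eq0 subr_eq0 (negbTE xy) orbF => /eqP b0.
  by move: pos'; rewrite b0 B0 addr0 ltxx.
have y_bal' : wmoment ws' x = (b + wsum ws') *: (y - x).
  move/eqP: y_bal; rewrite addrC addr_eq0 => /eqP y_bal.
  by rewrite (wmoment_shift ws' x y) y_bal -scalerN opprB -scalerDl.
exists (wscale a ws' ++ wscale (b + wsum ws') ws); split.
- by rewrite weights_on_cat !weights_on_scale ?addr_ge0.
- rewrite wsum_cat !wsum_scale mulrDl addrCA [a * _]mulrC -mulrDr.
  by rewrite ltr_wpDl ?mulr_ge0 ?mulr_gt0.
rewrite wmoment_cat !wmoment_scale y_bal'.
by rewrite scalerA mulrC -scalerA -scalerDr x_bal scaler0.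
Qed.

Lemma in_hull_replace_both t v1 v2 s :
  t != v1 -> t != v2 -> v1 != v2 -> ~ in_hull v1 s -> in_hull t [:: v1, v2 & s] ->
  ~ (in_hull v1 [:: t, v2 & s] /\ in_hull v2 [:: v1, t & s]).
Proof.
move=> tv1 tv2 v12 v1_out t_in [v1_in v2_in]; apply: v1_out.
have swap u u' : {subset [:: u, u' & s] <= [:: u', u & s]}.
  by move=> z; rewrite !inE orbCA.
have v1_in' : in_hull v1 (v2 :: s).
  by apply: in_hull_exchange v1_in t_in; rewrite eq_sym.
have v2_in' : in_hull v2 (v1 :: s).
  apply: in_hull_exchange (in_hull_sub (swap _ _) v2_in) (in_hull_sub (swap _ _) t_in).
  by rewrite eq_sym.
exact: in_hull_exchange v12 v1_in' v2_in'.
Qed.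

Definition hull_points_in S Q L :=
  forall x, x \in S -> x \notin Q -> in_hull x Q -> x \in L.

Lemma eq_hull_points_in S Q Q' L :
  Q =i Q' -> hull_points_in S Q L -> hull_points_in S Q' L.
Proof.
move=> eqQ inL x xS; rewrite -eqQ => xQ x_in.
by apply: inL xS xQ (in_hull_sub _ x_in) => z; rewrite eqQ.
Qed.

Lemma hull_points_in_replace S L t v1 v2 s :
  t != v1 -> t != v2 -> v1 != v2 -> ~ in_hull v1 s -> in_hull t [:: v1, v2 & s] ->
  hull_points_in S [:: v1, v2 & s] L ->
  hull_points_in S [:: t, v2 & s] (rem t L) \/
  hull_points_in S [:: v1, t & s] (rem t L).
Proof.
move=> tv1 tv2 v12 v1_out t_in inL.
have [v1_in|v1_out'] := classic (in_hull v1 [:: t, v2 & s]); [right|left].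
- have v2_out : ~ in_hull v2 [:: v1, t & s].
    by move=> v2_in; apply: (in_hull_replace_both tv1 tv2 v12 v1_out t_in).
  move=> x xS; rewrite !inE !negb_or => /and3P[xv1 xt xs] x_in.
  have xv2 : x != v2 by apply: contraPneq v2_out => <-.
  rewrite rem_mem //; apply: inL xS _ _; first by rewrite !inE !negb_or xv1 xv2.
  apply: (@in_hull_cons_trans t (v1 :: s)) t_in _.
    by move=> z; rewrite !inE => /orP[->|->]; rewrite ?orbT.
  by apply: in_hull_sub x_in => z; rewrite !inE orbCA.
- move=> x xS; rewrite !inE !negb_or => /and3P[xt xv2 xs] x_in.
  have xv1 : x != v1 by apply: contraPneq v1_out' => <-.
  rewrite rem_mem //; apply: inL xS _ _; first by rewrite !inE !negb_or xv1 xv2.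
  apply: (@in_hull_cons_trans t (v2 :: s)) t_in x_in.
  by move=> z; rewrite !inE => /orP[->|->]; rewrite ?orbT.
Qed.
End ConvexHull.

Section Plane.
Variable R : realFieldType.
Implicit Types (a b c d p x y z : point R) (S : seq (point R)).

Local Notation vec := (R^o * R^o)%type.
Local Notation in_hull := (@in_hull R vec).
Local Notation hull_points_in := (@hull_points_in R vec).

Lemma scale_regular k (x : R^o) : k *: x = k * x.
Proof. by []. Qed.

Lemma in_hull2_orient0 p a b : in_hull p [:: a; b] -> orient a b p = 0.
Proof.
case/in_hull2_inv=> u [v [_ _ pos bal]].
move: (congr1 fst bal) (congr1 snd bal); rewrite /= !scale_regular => bal1 bal2.
apply: (mulfI (lt0r_neq0 pos)).
have -> : (u + v) * orient a b p =
    (b.2 - a.2) * (u * (a.1 - p.1) + v * (b.1 - p.1))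
  - (b.1 - a.1) * (u * (a.2 - p.2) + v * (b.2 - p.2)) by rewrite /orient; ring.
by rewrite bal1 bal2 !mulr0 subr0.
Qed.

Lemma gp_not_in_hull2 S x a b :
  general_position S -> a \in S -> b \in S -> x \in S -> a != b -> b != x -> a != x ->
  ~ in_hull x [:: a; b].
Proof. by move=> gp aS bS xS ab bx ax /in_hull2_orient0/eqP; apply/negP; apply: gp. Qed.

Lemma in_hull_tri p a b c : in_tri p a b c -> in_hull p [:: a; b; c].
Proof.
case=> u [v [w [u_ge0 v_ge0 w_ge0 uvw ->]]].
exists [:: (u, a); (v, b); (w, c)]; split.
- by rewrite /weights_on /= !inE !eqxx u_ge0 v_ge0 w_ge0 !orbT.
- by rewrite /wsum !big_cons big_nil /=; lra.
have -> : w = 1 - u - v by rewrite -uvw; ring.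
rewrite /wmoment !big_cons big_nil.
by apply: injective_projections; rewrite /= !scale_regular; ring.
Qed.

Lemma in_hull_region p a b c d : in_region p a b c d -> in_hull p [:: a; b; c; d].
Proof.
have tri_sub x y z : in_tri p x y z ->
    {subset [:: x; y; z] <= [:: a; b; c; d]} -> in_hull p [:: a; b; c; d].
  by move=> /in_hull_tri p_in sub; apply: in_hull_sub p_in.
rewrite /in_region; case: ifP => _ [] /tri_sub; apply=> z; rewrite !inE;
  by case/or3P=> /eqP->; rewrite eqxx ?orbT.
Qed.

Lemma orient_seg x y a b t :
  orient x y (a.1 + t * (b.1 - a.1), a.2 + t * (b.2 - a.2)) =
  (1 - t) * orient x y a + t * orient x y b.
Proof. by rewrite /orient /=; ring. Qed.

Lemma on_seg_left a b : on_seg a a b.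
Proof. by exists 0; rewrite lexx ler01 !mul0r !addr0; case: a. Qed.

Lemma on_seg_sym p a b : on_seg p a b -> on_seg p b a.
Proof.
case=> t [/andP[t_ge0 t_le1] ->]; exists (1 - t); split; first by apply/andP; lra.
by congr pair; ring.
Qed.

Lemma adjacent_segs_meet p x y z :
  orient x y z != 0 -> on_seg p x y -> on_seg p y z -> p = y.
Proof.
move=> xyz [t [_ p_xy]] [s [_ p_yz]].
have oxx : orient x y x = 0 by rewrite /orient; ring.
have oyy : orient x y y = 0 by rewrite /orient; ring.
have : orient x y p = 0 by rewrite p_xy orient_seg oxx oyy !mulr0 addr0.
rewrite p_yz orient_seg oyy mulr0 add0r => /eqP.
rewrite mulf_eq0 (negbTE xyz) orbF => /eqP s0.
by rewrite s0 !mul0r !addr0; case: (y).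
Qed.

Lemma separated_segs_disjoint p a b c d :
  a != c -> orient a c b * orient a c d < 0 -> on_seg p a b -> on_seg p c d -> False.
Proof.
move=> ac sep [t [/andP[t_ge0 _] p_ab]] [s [/andP[s_ge0 _] p_cd]].
have oaa : orient a c a = 0 by rewrite /orient; ring.
have occ : orient a c c = 0 by rewrite /orient; ring.
have e : t * orient a c b = s * orient a c d.
  move: (orient_seg a c a b t) (orient_seg a c c d s).
  by rewrite -p_ab -p_cd oaa occ !mulr0 !add0r => <- <-.
move: e sep; set B := orient a c b; set D := orient a c d => e sep.
have /and3P[B0 D0 _] : [&& B != 0, D != 0 & (B < 0) (+) (D < 0)] by rewrite -mulr_lt0.
have BB : 0 < B * B by rewrite lt_def mulf_neq0 // -expr2 sqr_ge0.
have DD : 0 < D * D by rewrite lt_def mulf_neq0 // -expr2 sqr_ge0.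
have [t0 s0] : t = 0 /\ s = 0 by split; nra.
move: p_ab p_cd; rewrite t0 s0 !mul0r !addr0 => -> ac_eq.
by move: ac; rewrite [a]surjective_pairing [c]surjective_pairing ac_eq eqxx.
Qed.

Lemma simple_quad_diagonal a b c d :
  uniq [:: a; b; c; d] -> orient a c b * orient a c d < 0 ->
  orient b c d != 0 -> orient d a b != 0 -> simple_quad a b c d.
Proof.
move=> abcd sep bcd dab.
have ac : a != c.
  by move: abcd; rewrite /= !inE !negb_or => /and4P[/and3P[_ -> _]].
move: (sep); rewrite mulr_lt0 => /and3P[acb acd _].
have abc : orient a b c != 0.
  by rewrite (_ : orient a b c = - orient a c b) ?oppr_eq0 // /orient; ring.
have cda : orient c d a != 0.
  by rewrite (_ : orient c d a = orient a c d) // /orient; ring.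
split=> //.
- by case=> p [pab pcd]; apply: separated_segs_disjoint ac sep pab pcd.
- case=> p [pbc pda].
  apply: (separated_segs_disjoint ac _ (on_seg_sym pda) (on_seg_sym pbc)).
  by rewrite mulrC.
by split=> p; apply: adjacent_segs_meet.
Qed.

Lemma hole4_of_diagonal S a b c d :
  general_position S -> {subset [:: a; b; c; d] <= S} -> uniq [:: a; b; c; d] ->
  orient a c b * orient a c d < 0 -> hull_points_in S [:: a; b; c; d] [::] ->
  hole4 S a b c d.
Proof.
move=> gp sub abcd sep empty.
have gpQ x y z : x \in [:: a; b; c; d] -> y \in [:: a; b; c; d] ->
    z \in [:: a; b; c; d] -> x != y -> y != z -> x != z -> orient x y z != 0.
  by move=> /sub ? /sub ? /sub ?; apply: gp.
move: (abcd); rewrite /= !inE !negb_or => /and4P[/and3P[ab ac ad] /andP[bc bd] cd _].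
split; first exact/allP.
- by apply: simple_quad_diagonal => //; apply: gpQ; rewrite ?inE ?eqxx ?orbT // eq_sym.
move=> x xS [/in_hull_region x_in x_bd].
have [xQ|xQ] := boolP (x \in [:: a; b; c; d]); last by move: (empty x xS xQ x_in).
apply: x_bd; move: xQ; rewrite !inE => /or4P[] /eqP->;
  [apply: Or41 | apply: Or42 | apply: Or43 | apply: Or44]; exact: on_seg_left.
Qed.

Lemma separating_diagonal p a b c :
  orient p a b != 0 -> orient p a c != 0 -> orient p b c != 0 ->
  [\/ orient p a b * orient p a c < 0, orient p b a * orient p b c < 0 |
      orient p c a * orient p c b < 0].
Proof.
have -> : orient p b a = - orient p a b by rewrite /orient; ring.
have -> : orient p c a = - orient p a c by rewrite /orient; ring.
have -> : orient p c b = - orient p b c by rewrite /orient; ring.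
set A := orient p a b; set B := orient p a c; set C := orient p b c => A0 B0 C0.
have [AB|AB] := ltrP (A * B) 0; first by constructor 1.
have [AC|AC] := ltrP (- A * C) 0; first by constructor 2.
have [BC|BC] := ltrP (- B * - C) 0; first by constructor 3.
have BB : 0 < B * B by rewrite lt_def mulf_neq0 // -expr2 sqr_ge0.
have AB0 : A * B != 0 by rewrite mulf_neq0.
have AC0 : A * C != 0 by rewrite mulf_neq0.
have BC0 : B * C != 0 by rewrite mulf_neq0.
exfalso; nra.
Qed.

Lemma hole4_of_empty_hull S p a b c :
  general_position S -> {subset [:: p; a; b; c] <= S} -> uniq [:: p; a; b; c] ->
  hull_points_in S [:: p; a; b; c] [::] ->
  exists q1 q2 q3 q4, perm_eq [:: q1; q2; q3; q4] [:: p; a; b; c] /\ hole4 S q1 q2 q3 q4.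
Proof.
move=> gp sub pabc empty.
have hole_of q1 q2 q3 q4 : orient q1 q3 q2 * orient q1 q3 q4 < 0 ->
    perm_eq [:: q1; q2; q3; q4] [:: p; a; b; c] ->
    exists q1 q2 q3 q4,
      perm_eq [:: q1; q2; q3; q4] [:: p; a; b; c] /\ hole4 S q1 q2 q3 q4.
  move=> sep qQ; exists q1, q2, q3, q4; split=> //.
  have eqQ := perm_mem qQ.
  apply: hole4_of_diagonal sep _ => //.
  - by move=> x; rewrite eqQ; apply: sub.
  - by rewrite (perm_uniq qQ).
  - by apply: eq_hull_points_in empty => x; rewrite eqQ.
move: (pabc); rewrite /= !inE !negb_or => /and4P[/and3P[pa pb pc] /andP[ab ac] bc _].
have gpQ x y z : x \in [:: p; a; b; c] -> y \in [:: p; a; b; c] ->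
    z \in [:: p; a; b; c] -> x != y -> y != z -> x != z -> orient x y z != 0.
  by move=> /sub ? /sub ? /sub ?; apply: gp.
have [pab pac pbc] : [/\ orient p a b != 0, orient p a c != 0 & orient p b c != 0].
  by split; apply: gpQ; rewrite ?inE ?eqxx ?orbT.
have [sep|sep|sep] := separating_diagonal pab pac pbc.
- by apply: (hole_of p b a c sep); rewrite perm_cons; apply/permP => P /=; apply: addnCA.
- exact: (hole_of p a b c).
- apply: (hole_of p a c b sep); rewrite !perm_cons.
  by apply/permP => P /=; rewrite !addn0 addnC.
Qed.

Section BalancedHole.
Variables red blue : seq (point R).
Hypotheses (red_blue : {in red, forall x, x \notin blue})
           (gp : general_position (red ++ blue)).

Definition balanced_4hole :=
  exists a b c d : point R,
    hole4 (red ++ blue) a b c d /\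
    count (fun x => x \in red) [:: a; b; c; d] = 2%N /\
    count (fun x => x \in blue) [:: a; b; c; d] = 2%N.

Lemma red_blue_neq r b : r \in red -> b \in blue -> r != b.
Proof. by move=> rR bB; apply: contraTneq bB => <-; apply: red_blue. Qed.

Lemma balanced_4hole_of_empty r1 r2 b1 b2 :
  r1 \in red -> r2 \in red -> b1 \in blue -> b2 \in blue -> r1 != r2 -> b1 != b2 ->
  hull_points_in (red ++ blue) [:: r1; r2; b1; b2] [::] -> balanced_4hole.
Proof.
move=> r1R r2R b1B b2B r12 b12 empty.
have blue_red x : x \in blue -> (x \in red) = false.
  by move=> xB; apply: contraTF xB => /red_blue.
have sub : {subset [:: r1; r2; b1; b2] <= red ++ blue}.
  by move=> x; rewrite !inE mem_cat => /or4P[] /eqP->; rewrite ?r1R ?r2R ?b1B ?b2B ?orbT.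
have uniq_Q : uniq [:: r1; r2; b1; b2].
  by rewrite /= !inE !negb_or r12 b12 !red_blue_neq.
have [q1 [q2 [q3 [q4 [qQ hole]]]]] := hole4_of_empty_hull gp sub uniq_Q empty.
exists q1, q2, q3, q4; rewrite !(permP qQ) /= r1R r2R b1B b2B.
by rewrite !blue_red // (negbTE (red_blue r1R)) (negbTE (red_blue r2R)).
Qed.

Lemma balanced_4hole_of_cover L r1 r2 b1 b2 :
  r1 \in red -> r2 \in red -> b1 \in blue -> b2 \in blue -> r1 != r2 -> b1 != b2 ->
  hull_points_in (red ++ blue) [:: r1; r2; b1; b2] L -> balanced_4hole.
Proof.
have [n] := ubnP (size L); elim: n => // n IH in L r1 r2 b1 b2 *; rewrite ltnS => size_L.
move=> r1R r2R b1B b2B r12 b12 cover.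
have [[t [tS tQ t_in]]|none] := classic (exists t, [/\ t \in red ++ blue,
    t \notin [:: r1; r2; b1; b2] & in_hull t [:: r1; r2; b1; b2]]); last first.
  apply: balanced_4hole_of_empty r1R r2R b1B b2B r12 b12 _ => x xS xQ x_in.
  by case: none; exists x.
have tL := cover t tS tQ t_in.
have size_rem : (size (rem t L) < n)%N.
  by rewrite size_rem // (leq_trans _ size_L) // ltn_predL; case: (L) tL.
move: tQ; rewrite !inE !negb_or => /and4P[tr1 tr2 tb1 tb2].
have [tR|tB] : t \in red \/ t \in blue by apply/orP; rewrite -mem_cat.
- have r1_out : ~ in_hull r1 [:: b1; b2].
    apply: (gp_not_in_hull2 gp); rewrite ?mem_cat ?r1R ?b1B ?b2B ?orbT //;
      by rewrite eq_sym red_blue_neq.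
  have [cover'|cover'] := hull_points_in_replace (V := vec) tr1 tr2 r12 r1_out t_in cover.
  + exact: IH cover'.
  + by apply: IH cover' => //; rewrite eq_sym.
- have b1_out : ~ in_hull b1 [:: r1; r2].
    apply: (gp_not_in_hull2 gp); rewrite ?mem_cat ?r1R ?r2R ?b1B ?orbT //;
      by rewrite red_blue_neq.
  have cover_b := eq_hull_points_in (V := vec) (mem_rot 2 [:: b1; b2; r1; r2]) cover.
  have t_in_b : in_hull t [:: b1; b2; r1; r2].
    by apply: in_hull_sub t_in => x; rewrite -(mem_rot 2).
  have [cover'|cover'] :=
    hull_points_in_replace (V := vec) tb1 tb2 b12 b1_out t_in_b cover_b.
  + exact: IH (eq_hull_points_in (V := vec) (mem_rot 2 [:: r1; r2; t; b2]) cover').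
  + apply: IH (eq_hull_points_in (V := vec) (mem_rot 2 [:: r1; r2; b1; t]) cover') => //.
    by rewrite eq_sym.
Qed.
End BalancedHole.

End Plane.

Lemma uniq_size2 (T : eqType) (s : seq T) :
  uniq s -> (2 <= size s)%N -> exists x y, [/\ x \in s, y \in s & x != y].
Proof.
case: s => [|x [|y s]] //= /andP[]; rewrite inE negb_or => /andP[xy _] _ _.
by exists x, y; rewrite !inE !eqxx orbT.
Qed.

Unset Implicit Arguments.

Theorem mainTheorem1 (R : realFieldType) (red blue : seq (point R)) :
  uniq red -> uniq blue -> [seq x <- red | x \in blue] = [::] ->
  general_position (red ++ blue) ->
  (2 <= size red)%N -> (2 <= size blue)%N ->
  exists a b c d : point R,
    hole4 (red ++ blue) a b c d /\
    count (fun x => x \in red) [:: a; b; c; d] = 2%N /\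
    count (fun x => x \in blue) [:: a; b; c; d] = 2%N.
Proof.
move=> red_uniq blue_uniq no_common gp red2 blue2.
have red_blue : {in red, forall x, x \notin blue}.
  by apply/hasPn; rewrite has_filter no_common.
have [r1 [r2 [r1R r2R r12]]] := uniq_size2 red_uniq red2.
have [b1 [b2 [b1B b2B b12]]] := uniq_size2 blue_uniq blue2.
apply: (balanced_4hole_of_cover red_blue gp r1R r2R b1B b2B r12 b12 (L := red ++ blue)).
by move=> x xS.
Qed.
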